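(* Let $(x,y,z)$ be positive integers with $x\ge2$, $4\le y-x\le 5000$, satisfying $$(x-1)x(x+1)(y-1)y(y+1)=(z-1)z(z+1).$$ Then $(x,y,z)=(F_{2n-1},F_{2n+1},F_{2n}^2)$ for some integer $n\ge1$.
   Context: $F_m$ denotes the $m$-th Fibonacci number: $F_0=0$, $F_1=1$, $F_{m+1}=F_m+F_{m-1}$. The condition $x\ge 2$ excludes the solutions with $x=1$, for which both sides vanish. *)

From mathcomp Require Import all_boot.

Fixpoint fib (m : nat) : nat :=
  match m with
  | 0 => 0
  | 1 => 1
  | (k.+1 as m').+1 => fib m' + fib k
  end.

From Stdlib Require Import ZArith Lia.
From mathcomp Require Import all_boot zify.

(* Write z = x y - t.  Since prod3 x * prod3 y < prod3 (x y) and, comparing sizes,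
   x y < 2 z, we have 1 <= t, and prod3 z = prod3 x * prod3 y becomes
   t^3 - t = x y (x^2 + y^2 + 3 t^2 - 2 - 3 t x y).
   For t = 1 this says x^2 + y^2 + 1 = 3 x y, whose solutions with x < y descend through
   (x, y) |-> (3 x - y, x) to (1, 2); they are therefore consecutive odd-indexed Fibonacci
   numbers, and Cassini's identity gives z = x y - 1 = F_(2n)^2.
   For t >= 2 the identity forces 507 t x < 388 y, 2 t x <= y and x y <= t^3; with
   y - x <= 5000 this leaves x <= 58 and finitely many t.  For y >= 2 t x the difference
   of the two sides is monotone in y, so each remaining (x, t) is excluded by a bisection
   in y, evaluated by computation. *)

Section ConsecutiveProducts.
Local Open Scope Z_scope.

Definition prod3 (z : Z) : Z := (z - 1) * z * (z + 1).

Lemma prod3_lt a b : 1 <= a < b -> prod3 a < prod3 b.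
Proof.
move=> [a_ge1 ab].
have -> : prod3 b = prod3 a + (b - a) * (a * a + a * b + b * b - 1) by rewrite /prod3; ring.
apply: Z.lt_add_pos_r; apply: Z.mul_pos_pos; nia.
Qed.

Definition defect (x t y : Z) : Z :=
  t * t * t - t - x * y * (x * x + y * y + 3 * t * t - 2 - 3 * t * x * y).

Lemma prod3_mul_sub_defect x y t :
  prod3 x * prod3 y - prod3 (x * y - t) = defect x t y.
Proof. rewrite /prod3 /defect; ring. Qed.

Lemma defect_nonincr x t a b :
  1 <= x -> 1 <= t -> 2 * t * x <= a <= b -> defect x t b <= defect x t a.
Proof.
move=> x1 t1 [ha ab].
suff : 0 <= defect x t a - defect x t b by lia.
set u := a - 2 * t * x; set v := b - 2 * t * x.
have -> : defect x t a - defect x t b =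
  x * (b - a) * (3 * (t * x) * (u + v) + u * u + u * v + v * v + x * x + 3 * t * t - 2).
  by rewrite /defect /u /v; ring.
have u0 : 0 <= u by lia.
have uv : u <= v by lia.
apply: Z.mul_nonneg_nonneg; first nia.
have : 0 <= 3 * (t * x) * (u + v) by apply: Z.mul_nonneg_nonneg; nia.
nia.
Qed.

Lemma prod3_eq_mul_lt x y z : 2 <= x -> 2 <= y -> 1 <= z ->
  prod3 z = prod3 x * prod3 y -> z < x * y.
Proof.
move=> x2 y2 z1 hz.
have lt_xy : prod3 z < prod3 (x * y).
  have := prod3_mul_sub_defect x y 0; rewrite Z.sub_0_r /defect -hz.
  have : 0 < x * y * (x * x + y * y - 2) by apply: Z.mul_pos_pos; nia.
  lia.
case: (Z.lt_total z (x * y)) => [// | [ez | gt_z]].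
- by rewrite ez in lt_xy; lia.
- by have := prod3_lt (x * y) z; nia.
Qed.

Lemma prod3_eq_mul_gt_half x y z : 2 <= x -> 2 <= y -> 1 <= z ->
  prod3 z = prod3 x * prod3 y -> x * y < 2 * z.
Proof.
move=> x2 y2 z1 hz; rewrite Z.lt_nge => le_2z.
have cube_le : (2 * z) ^ 3 <= (x * y) ^ 3 by apply: Z.pow_le_mono_l; lia.
have hx : x ^ 3 <= 2 * prod3 x by rewrite /prod3; nia.
have hy : y ^ 3 <= 2 * prod3 y by rewrite /prod3; nia.
have : (x * y) ^ 3 <= 4 * prod3 z.
  rewrite hz Z.pow_mul_l; apply: (Z.le_trans _ (2 * prod3 x * (2 * prod3 y))); last lia.
  apply: Z.mul_le_mono_nonneg; nia.
rewrite /prod3 in cube_le *; nia.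
Qed.

Lemma large_shift_bounds x y t :
  2 <= x < y -> 2 <= t -> x * y < 2 * (x * y - t) -> defect x t y = 0 ->
  [/\ 2 * t * x <= y, 507 * t * x < 388 * y & x * y <= t * t * t].
Proof.
move=> [x2 xy] t2 half hdef.
set k := x * x + y * y + 3 * t * t - 2 - 3 * t * x * y.
have ek : t * t * t - t = x * y * k by move: hdef; rewrite /defect /k; lia.
have k1 : 1 <= k by nia.
have cube : x * y <= t * t * t by nia.
have three_t : 3 * t * (x * y) < 2 * (x * x + y * y) by rewrite /k in k1; nia.
have gap : 3 * (x * y) < x * x + y * y by nia.
(* [y/x] exceeds the root [(3 + sqrt 5)/2 > 13/5] of [X^2 - 3X + 1]. *)
have ratio : 13 * x < 5 * y by nia.
(* Hence [2 (x^2 + y^2) < (2 + 50/169) y^2 = 388 y^2 / 169]. *)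
have lt_388 : 507 * t * x < 388 * y by nia.
split => //.
rewrite Z.le_ngt => lt_y.
have : t * x * y < x * x + 3 * t * t by rewrite /k in k1; nia.
nia.
Qed.

Lemma large_shift_x_le_58 x y t :
  2 <= x -> 2 <= t -> 507 * t * x < 388 * y -> x * y <= t * t * t ->
  y <= x + 5000 -> x <= 58.
Proof.
move=> x2 t2 lt_388 cube y_le; rewrite Z.le_ngt => x59.
have : (507 * t * x) ^ 3 < (388 * y) ^ 3 by apply: Z.pow_lt_mono_l; nia.
have : 507 ^ 3 * x ^ 4 * y <= (507 * t * x) ^ 3.
  have -> : (507 * t * x) ^ 3 = 507 ^ 3 * x ^ 3 * (t * t * t) by ring.
  have -> : 507 ^ 3 * x ^ 4 * y = 507 ^ 3 * x ^ 3 * (x * y) by ring.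
  apply: Z.mul_le_mono_nonneg_l => //; nia.
move=> h1 h2; have h4 : 507 ^ 3 * x ^ 4 < 388 ^ 3 * y ^ 2 by nia.
nia.
Qed.

End ConsecutiveProducts.

Section Bisection.
Local Open Scope Z_scope.
Variable f : Z -> Z.

Fixpoint no_root_in (lo hi : Z) (n : nat) : bool :=
  (hi <? lo) ||
  if n is n'.+1 then
    let m := (lo + hi) / 2 in
    let v := f m in
    if v =? 0 then false
    else if 0 <? v then no_root_in (m + 1) hi n' else no_root_in lo (m - 1) n'
  else false.

Variable lo0 : Z.
Hypothesis f_nonincr : forall a b, lo0 <= a <= b -> f b <= f a.

Lemma no_root_inP n lo hi :
  lo0 <= lo -> no_root_in lo hi n -> forall y, lo <= y <= hi -> f y <> 0.
Proof.
elim: n lo hi => [|n IH] lo hi lo0_lo /=.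
  by rewrite orbF => /Z.ltb_lt; lia.
case: (Z.ltb_spec hi lo) => [? _ y | le_lo_hi /=]; first lia.
set m := (lo + hi) / 2.
have m_bounds : lo <= m <= hi.
  by have := Z_div_mod_eq_full (lo + hi) 2; have := Z.mod_pos_bound (lo + hi) 2; lia.
case: (Z.eqb_spec (f m) 0) => // fm0.
case: (Z.ltb_spec 0 (f m)) => [fm_pos | fm_neg] hrec y hy.
- case: (Z.le_gt_cases y m) => [y_le | y_gt].
  + by have := f_nonincr y m; lia.
  + by apply: (IH (m + 1) hi) => //; lia.
- case: (Z.le_gt_cases m y) => [y_ge | y_lt].
  + by have := f_nonincr m y; lia.
  + by apply: (IH lo (m - 1)) => //; lia.
Qed.

End Bisection.

Section FiniteSearch.
Local Open Scope Z_scope.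

Definition shift_max (x : Z) : Z := 388 * (x + 5000) / (507 * x).

(* Every interval searched has fewer than [2 ^ 13] points. *)
Definition no_large_shift_root (x : Z) : bool :=
  all (fun t => no_root_in (defect x (Z.of_nat t)) (2 * Z.of_nat t * x) (x + 5000) 13)
      (iota 2 (Z.to_nat (shift_max x))).

Lemma no_large_shift_rootP x t y :
  no_large_shift_root x -> 1 <= x -> 2 <= t <= shift_max x -> 2 * t * x <= y <= x + 5000 ->
  defect x t y <> 0.
Proof.
move=> /allP search x1 t_bounds y_bounds.
have /search : Z.to_nat t \in iota 2 (Z.to_nat (shift_max x)).
  by rewrite mem_iota; apply/andP; split; apply/leP; rewrite -?plusE; lia.
rewrite Z2Nat.id; last lia.
have mono a b : 2 * t * x <= a <= b -> defect x t b <= defect x t a.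
  by move=> ab; apply: defect_nonincr; lia.
by move/(no_root_inP _ _ mono _ _ _ (Z.le_refl _)); apply.
Qed.

Lemma no_large_shift_root_upto_58 : all (fun x => no_large_shift_root (Z.of_nat x)) (iota 2 57).
Proof. by vm_compute. Qed.

End FiniteSearch.

Lemma fib_add2 k : fib k.+2 = fib k.+1 + fib k.
Proof. by []. Qed.

Lemma fib_add4 k : fib k.+4 + fib k = 3 * fib k.+2.
Proof. rewrite !fib_add2; lia. Qed.

Lemma fib_cassini k : fib k * fib k.+2 + ~~ odd k = fib k.+1 ^ 2 + odd k.
Proof.
elim: k => [// | k IH].
rewrite -[odd k.+1]/(~~ odd k) !fib_add2 in IH *.
by case: (odd k) IH => /=; nia.
Qed.

Lemma fib_cassini_odd m : fib (2 * m).+1 * fib (2 * m).+3 = fib (2 * m).+2 ^ 2 + 1.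
Proof. by have := fib_cassini (2 * m).+1; rewrite -[odd _]/(~~ odd (2 * m)) oddM addn0. Qed.

Section Markov.
Local Open Scope Z_scope.

Lemma markov_fib x y : 0 < x < y -> x * x + y * y + 1 = 3 * x * y ->
  exists m, x = Z.of_nat (fib (2 * m).+1) /\ y = Z.of_nat (fib (2 * m).+3).
Proof.
move=> hxy; have y0 : 0 <= y by lia.
move: y y0 x hxy; apply: Z_lt_induction => y IH x hxy e.
case: (Z.eq_dec x 1) => [x1 | x_ne1].
  exists 0%N; rewrite x1; split => //.
  have /Z.mul_eq_0 roots : (y - 1) * (y - 2) = 0 by rewrite x1 in e; lia.
  by have -> : y = 2 by lia.
have ex' : (3 * x - y) * y = x * x + 1 by lia.
have [m [hx' hx]] : exists m, 3 * x - y = Z.of_nat (fib (2 * m).+1) /\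
                              x = Z.of_nat (fib (2 * m).+3).
  apply: IH; [lia | split | nia].
  - by apply/(Z.mul_pos_cancel_r _ y); lia.
  - by apply/(Z.mul_lt_mono_pos_r y); nia.
exists m.+1.
have -> : (2 * m.+1).+3 = (2 * m).+1.+4 by lia.
have -> : (2 * m.+1).+1 = (2 * m).+3 by lia.
by split=> //; have := fib_add4 (2 * m).+1; lia.
Qed.

End Markov.

Section Reduction.
Local Open Scope Z_scope.

Lemma prod3_eq_mul_markov x y z : 2 <= x < y -> y <= x + 5000 -> 1 <= z ->
  prod3 z = prod3 x * prod3 y -> z = x * y - 1 /\ x * x + y * y + 1 = 3 * x * y.
Proof.
move=> [x2 xy] y_le z1 hz.
have z_lt := prod3_eq_mul_lt x y z x2 ltac:(lia) z1 hz.
have z_gt := prod3_eq_mul_gt_half x y z x2 ltac:(lia) z1 hz.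
set t := x * y - z; have ez : z = x * y - t by rewrite /t; lia.
have hdef : defect x t y = 0 by rewrite -prod3_mul_sub_defect -ez hz; lia.
case: (Z.le_gt_cases t 1) => [t_le1 | t_gt1].
  have t1 : t = 1 by lia.
  split; first lia.
  have : x * y * (x * x + y * y + 1 - 3 * x * y) = 0 by move: hdef; rewrite t1 /defect; lia.
  by case/Z.mul_eq_0 => [/Z.mul_eq_0 | ]; lia.
have [y_ge lt_388 cube] := large_shift_bounds x y t ltac:(lia) ltac:(lia) ltac:(lia) hdef.
have x58 := large_shift_x_le_58 x y t x2 ltac:(lia) lt_388 cube y_le.
have t_le : t <= shift_max x by apply: Z.div_le_lower_bound; lia.
have /allP search := no_large_shift_root_upto_58.
have /search : Z.to_nat x \in iota 2 57.
  by rewrite mem_iota; apply/andP; split; apply/leP; rewrite -?plusE; lia.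
rewrite Z2Nat.id; last lia.
by move/no_large_shift_rootP => /(_ t y); lia.
Qed.

End Reduction.

Lemma prod3_of_nat n : 0 < n -> prod3 (Z.of_nat n) = Z.of_nat ((n - 1) * n * (n + 1)).
Proof. by move=> n0; rewrite /prod3 !Nat2Z.inj_mul Nat2Z.inj_add Nat2Z.inj_sub //; apply/leP. Qed.

Theorem corollary2 (x y z : nat) :
  0 < x -> 0 < y -> 0 < z ->
  2 <= x ->
  x + 4 <= y -> y <= x + 5000 ->
  (x - 1) * x * (x + 1) * ((y - 1) * y * (y + 1)) = (z - 1) * z * (z + 1) ->
  exists n : nat, 1 <= n /\
    x = fib (2 * n - 1) /\ y = fib (2 * n + 1) /\ z = fib (2 * n) ^ 2.
Proof.
move=> x0 y0 z0 x2 y_lo y_hi e.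
have ez : prod3 (Z.of_nat z) = (prod3 (Z.of_nat x) * prod3 (Z.of_nat y))%Z.
  by rewrite !prod3_of_nat // -e; apply: Nat2Z.inj_mul.
have [ez' markov] :=
  prod3_eq_mul_markov (Z.of_nat x) (Z.of_nat y) (Z.of_nat z) ltac:(lia) ltac:(lia) ltac:(lia) ez.
have [m [hx hy]] := markov_fib (Z.of_nat x) (Z.of_nat y) ltac:(lia) markov.
exists m.+1; have := fib_cassini_odd m.
have -> : 2 * m.+1 - 1 = (2 * m).+1 by lia.
have -> : 2 * m.+1 + 1 = (2 * m).+3 by lia.
have -> : 2 * m.+1 = (2 * m).+2 by lia.
lia.
Qed.
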